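(* Suppose there is $K>0$ such that $\|\nabla_{(\theta,x)}\ell(\theta,x)-\nabla_{(\theta,x)}\ell(\theta',x')\|\le K\|(\theta,x)-(\theta',x')\|$ for all $(\theta,x),(\theta',x')\in\mathbb{R}^{d_\theta}\times\mathbb{R}^{d_x}$. Then there is a constant $K_{\mathcal{F}}>0$ such that $$\|\nabla_\theta\mathcal{F}(\theta,q)-\nabla_\theta\mathcal{F}(\theta',q')\|\le K_{\mathcal{F}}\big(\|\theta-\theta'\|+\mathsf{W}_1(q,q')\big)$$ for all $\theta,\theta'\in\mathbb{R}^{d_\theta}$ and $q,q'\in\mathcal{P}(\mathbb{R}^{2d_x})$.
   Context: $\ell(\theta,x)=\log p_\theta(y,x)$ for a latent variable model $p_\theta(y,x)$ with fixed data $y$. $\mathcal{P}(\mathbb{R}^{2d_x})$: probability measures on $\mathbb{R}^{d_x}\times\mathbb{R}^{d_x}$ with Lebesgue density and finite second moment; $\mathsf{W}_1$ is the Wasserstein-1 distance. Here $\nabla_\theta\mathcal{F}(\theta,q):=-\int\nabla_\theta\ell(\theta,x)\,q(\mathrm{d}x,\mathrm{d}u)$ is the $\theta$-gradient of the momentum-enriched free energy $\mathcal{F}(\theta,m,q)=\int\log\frac{q(x,u)}{p_\theta(y,x)r_{\eta_x}(u)}q(x,u)\mathrm{d}x\mathrm{d}u+\frac{\eta_\theta}{2}\|m\|^2$ (with $r_{\eta_x}=\mathcal{N}(0,\eta_x^{-1}I)$), which does not depend on $m$. *)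

From HB Require Import structures.
From mathcomp Require Import all_boot all_order all_algebra.
From mathcomp Require Import all_classical all_reals all_analysis.
Set Implicit Arguments. Unset Strict Implicit. Unset Printing Implicit Defensive.
Import Order.TTheory GRing.Theory Num.Theory.
Import numFieldNormedType.Exports.
Local Open Scope classical_set_scope.
Local Open Scope ring_scope.

Definition enorm {R : realType} {n : nat} (v : 'rV[R]_n) : R :=
  Num.sqrt (\sum_(i < n) v 0 i ^+ 2).

Definition Rn (R : realType) (n : nat) := g_sigma_algebraType (@open 'rV[R]_n).

Definition box {R : realType} {m : nat} (a b : 'rV[R]_m) : set 'rV[R]_m :=
  [set x | forall i, a 0 i <= x 0 i <= b 0 i].
Definition box_vol {R : realType} {m : nat} (a b : 'rV[R]_m) : R :=
  \prod_(i < m) (b 0 i - a 0 i).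
Definition lebesgue_null {R : realType} {m : nat} (A : set 'rV[R]_m) : Prop :=
  forall eps : R, 0 < eps -> exists a b : nat -> 'rV[R]_m,
    (forall k i, a k 0 i <= b k 0 i) /\
    A `<=` \bigcup_k box (a k) (b k) /\
    (\sum_(0 <= k <oo) (box_vol (a k) (b k))%:E < eps%:E)%E.

(* Probability measures on R^dx x R^dx (identified with R^(2dx) via row_mx)
   with a Lebesgue density (= absolutely continuous w.r.t. Lebesgue measure)
   and finite second moment: the class P(R^(2 dx)). *)
Definition has_lebesgue_density {R : realType} {dx : nat}
    (q : probability (Rn R dx * Rn R dx)%type R) : Prop :=
  forall A : set (Rn R dx * Rn R dx)%type, measurable A ->
    lebesgue_null [set row_mx p.1 p.2 | p in A] -> q A = 0%E.

Definition finite_second_moment {R : realType} {dx : nat}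
    (q : probability (Rn R dx * Rn R dx)%type R) : Prop :=
  (\int[q]_p ((enorm (p.1 : 'rV[R]_dx)) ^+ 2 + (enorm (p.2 : 'rV[R]_dx)) ^+ 2)%:E
     < +oo)%E.

Definition in_P2 {R : realType} {dx : nat}
    (q : probability (Rn R dx * Rn R dx)%type R) : Prop :=
  has_lebesgue_density q /\ finite_second_moment q.

Definition is_coupling {R : realType} {dx : nat}
    (q q' : probability (Rn R dx * Rn R dx)%type R)
    (g : probability ((Rn R dx * Rn R dx) * (Rn R dx * Rn R dx))%type R) : Prop :=
  forall A : set (Rn R dx * Rn R dx)%type, measurable A ->
    g (fst @^-1` A) = q A /\ g (snd @^-1` A) = q' A.

Definition W1 {R : realType} {dx : nat}
    (q q' : probability (Rn R dx * Rn R dx)%type R) : \bar R :=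
  ereal_inf [set (\int[g]_z
      (enorm (row_mx ((z.1.1 : 'rV[R]_dx) - z.2.1) ((z.1.2 : 'rV[R]_dx) - z.2.2)))%:E)%E
    | g in is_coupling q q'].

Definition grad_theta {R : realType} {dt dx : nat}
    (l : 'rV[R]_dt -> 'rV[R]_dx -> R) (th : 'rV[R]_dt) (x : 'rV[R]_dx) : 'rV[R]_dt :=
  \row_i ('D_(delta_mx 0 i) (fun t => l t x) th).
Definition grad_x {R : realType} {dt dx : nat}
    (l : 'rV[R]_dt -> 'rV[R]_dx -> R) (th : 'rV[R]_dt) (x : 'rV[R]_dx) : 'rV[R]_dx :=
  \row_i ('D_(delta_mx 0 i) (fun y => l th y) x).
Definition grad_full {R : realType} {dt dx : nat}
    (l : 'rV[R]_dt -> 'rV[R]_dx -> R) (th : 'rV[R]_dt) (x : 'rV[R]_dx) : 'rV[R]_(dt + dx) :=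
  row_mx (grad_theta l th x) (grad_x l th x).

Definition grad_theta_F {R : realType} {dt dx : nat}
    (l : 'rV[R]_dt -> 'rV[R]_dx -> R) (th : 'rV[R]_dt)
    (q : probability (Rn R dx * Rn R dx)%type R) : 'rV[R]_dt :=
  \row_i (- Rintegral q setT (fun p : (Rn R dx * Rn R dx)%type =>
                                 grad_theta l th (p.1 : 'rV[R]_dx) 0 i)).

From HB Require Import structures.
From mathcomp Require Import all_boot all_order all_algebra.
From mathcomp Require Import all_classical all_reals all_analysis.
From mathcomp Require Import lra measurable_realfun.
Import Order.TTheory GRing.Theory Num.Theory.
Import numFieldNormedType.Exports.
Local Open Scope classical_set_scope.
Local Open Scope ring_scope.

(* For a coupling g of q and q', the i-th coordinate of
   grad_theta_F l th q - grad_theta_F l th' q' is the difference of the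
   integrals of d_i l(th, .) against q and of d_i l(th', .) against q', i.e. the
   integral against g of d_i l(th, z_1) - d_i l(th', z_2).  The Lipschitz bound on
   the full gradient bounds this by K (|th - th'| + |z_1 - z_2|); the integrals
   exist because d_i l grows at most linearly and q, q' have finite second
   moments.  Bounding the Euclidean norm by dt times the largest coordinate and
   taking the infimum over couplings gives the claim. *)

Section euclidean_norm.
Context {R : realType}.
Implicit Types (m n : nat).

Lemma enorm_ge0 {n} (v : 'rV[R]_n) : 0 <= enorm v.
Proof. exact: sqrtr_ge0. Qed.

Lemma enorm0 {n} : enorm (0 : 'rV[R]_n) = 0.
Proof. by rewrite /enorm big1 ?sqrtr0// => i _; rewrite mxE expr0n. Qed.

Lemma enorm_le {n} (v : 'rV[R]_n) (c : R) :
  0 <= c -> \sum_i v 0 i ^+ 2 <= c ^+ 2 -> enorm v <= c.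
Proof. by move=> c0 vc; rewrite -(ger0_norm c0) -sqrtr_sqr; exact: ler_wsqrtr. Qed.

Lemma coord_le_enorm {n} (v : 'rV[R]_n) j : `|v 0 j| <= enorm v.
Proof.
rewrite -sqrtr_sqr; apply: ler_wsqrtr.
by rewrite (bigD1 j)//= lerDl sumr_ge0// => i _; exact: sqr_ge0.
Qed.

Lemma enorm_row_mxl {m n} (a : 'rV[R]_m) (b : 'rV[R]_n) :
  enorm a <= enorm (row_mx a b).
Proof.
apply: ler_wsqrtr; rewrite big_split_ord/=.
under [X in _ <= X + _]eq_bigr do rewrite row_mxEl.
by rewrite lerDl sumr_ge0// => i _; exact: sqr_ge0.
Qed.

Lemma enorm_row_mx_le {m n} (a : 'rV[R]_m) (b : 'rV[R]_n) :
  enorm (row_mx a b) <= enorm a + enorm b.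
Proof.
apply: enorm_le; first by rewrite addr_ge0 ?enorm_ge0.
rewrite big_split_ord/=.
under eq_bigr do rewrite row_mxEl.
under [X in _ + X <= _]eq_bigr do rewrite row_mxEr.
have sqr_enorm k (u : 'rV[R]_k) : \sum_i u 0 i ^+ 2 = enorm u ^+ 2.
  by rewrite sqr_sqrtr// sumr_ge0// => i _; exact: sqr_ge0.
rewrite !sqr_enorm; have := enorm_ge0 a; have := enorm_ge0 b; nra.
Qed.

Lemma enorm_le_coord_bound {n} (v : 'rV[R]_n) (B : R) :
  0 <= B -> (forall i, `|v 0 i| <= B) -> enorm v <= n%:R * B.
Proof.
move=> B0 vB; apply: enorm_le; first by rewrite mulr_ge0.
apply: (@le_trans _ _ (\sum_(i < n) B ^+ 2)).
  apply: ler_sum => i _; rewrite -real_normK ?num_real//.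
  by rewrite ler_sqr ?inE ?normr_ge0.
rewrite sumr_const card_ord -[_ *+ n]mulr_natl exprMn.
apply: ler_wpM2r; first exact: sqr_ge0.
by rewrite -natrX ler_nat; case: n {v vB} => // n; rewrite leq_pmulr.
Qed.

Lemma enorm_le_mx_norm {n} (v : 'rV[R]_n) : enorm v <= n%:R * `|v|.
Proof.
apply: enorm_le_coord_bound => // j.
have /mapP[k _ ->] : `|v 0 j| \in [seq `|v x.1 x.2| | x : 'I_1 * 'I_n].
  by apply/mapP; exists (0, j) => //=; rewrite mem_enum.
by rewrite [leRHS]/Num.norm/= mx_normrE; apply/bigmax_geP; right; exists k.
Qed.

End euclidean_norm.

Lemma lipschitz_continuous (R : realType) (V W : normedModType R) (f : V -> W) (C : R) :
  (forall x y, `|f x - f y| <= C * `|x - y|) -> continuous f.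
Proof.
move=> fC x; have C1 : 0 < `|C| + 1 by rewrite ltr_wpDl.
apply/cvgrPdist_lt => e e0; near=> y.
rewrite (le_lt_trans (fC x y))// (@le_lt_trans _ _ ((`|C| + 1) * `|x - y|))//.
  by rewrite ler_wpM2r// (le_trans (ler_norm C))// lerDl.
rewrite -ltr_pdivlMl//; near: y; apply: cvgr_dist_lt => //.
by rewrite mulr_gt0 ?invr_gt0.
Unshelve. all: by end_near. Qed.

Section borel_measurability.
Context {R : realType}.

Lemma continuous_measurable_open (T : ptopologicalType) (f : T -> R) :
  continuous f -> measurable_fun setT (f : g_sigma_algebraType (@open T) -> R).
Proof.
move=> /continuousP fcont.
apply: (measurability _ (RGenOpens.measurableE R)) => _ [_ [a [b ->] <-]].
by rewrite setTI; apply: sub_sigma_algebra; apply: fcont; exact: interval_open.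
Qed.

Lemma measurable_coord {n} (j : 'I_n) :
  measurable_fun setT (fun v : Rn R n => (v : 'rV[R]_n) 0 j).
Proof. by apply: continuous_measurable_open; exact: coord_continuous. Qed.

Lemma measurable_coord_comp {d} {Y : measurableType d} {n} {u : Y -> Rn R n} j :
  measurable_fun setT u -> measurable_fun setT (fun y => (u y : 'rV[R]_n) 0 j).
Proof. exact: measurableT_comp (measurable_coord j). Qed.

Lemma measurable_enorm d (Y : measurableType d) n (u : Y -> 'rV[R]_n) :
  (forall j, measurable_fun setT (fun y => u y 0 j)) ->
  measurable_fun setT (fun y => enorm (u y)).
Proof.
move=> mu; apply: measurableT_comp.
  exact: continuous_measurable_fun (@sqrt_continuous R).
by apply: measurable_sum => j; exact: measurable_funX.
Qed.

Lemma measurable_enorm_row_mx d (Y : measurableType d) m n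
    (u : Y -> 'rV[R]_m) (v : Y -> 'rV[R]_n) :
  (forall j, measurable_fun setT (fun y => u y 0 j)) ->
  (forall j, measurable_fun setT (fun y => v y 0 j)) ->
  measurable_fun setT (fun y => enorm (row_mx (u y) (v y))).
Proof.
move=> mu mv; apply: measurable_enorm => j; rewrite -(splitK j).
case: (fintype.split j) => k.
- by apply: eq_measurable_fun (mu k) => y _; rewrite row_mxEl.
- by apply: eq_measurable_fun (mv k) => y _; rewrite row_mxEr.
Qed.

End borel_measurability.

Section marginal.
Local Open Scope ereal_scope.
Context d d' (X : measurableType d) (Y : measurableType d') (R : realType).
Variables (mu : {measure set X -> \bar R}) (g : {measure set Y -> \bar R}).
Variables (phi : Y -> X) (mphi : measurable_fun setT phi).
Hypothesis g_phi : forall A, measurable A -> g (phi @^-1` A) = mu A.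

Let integral_pushforwardE (f : X -> \bar R) :
  \int[mu]_x f x = \int[pushforward g phi]_x f x.
Proof. by apply: eq_measure_integral => A mA _; rewrite -g_phi. Qed.

Lemma integrable_marginal (f : X -> \bar R) :
  mu.-integrable setT f -> g.-integrable setT (f \o phi).
Proof.
move=> /integrableP[mf fint]; apply/integrableP; split.
  exact: measurableT_comp.
rewrite (le_lt_trans _ fint)// integral_pushforwardE ge0_integral_pushforward//.
exact: measurableT_comp.
Qed.

Lemma integral_marginal (f : X -> \bar R) :
  mu.-integrable setT f -> \int[mu]_x f x = \int[g]_y f (phi y).
Proof.
move=> fint; rewrite integral_pushforwardE integral_pushforward//.
- by case/integrableP: fint.
- by rewrite preimage_setT; exact: integrable_marginal.
Qed.

End marginal.
Arguments integrable_marginal {d d' X Y R mu g phi} mphi g_phi {f}.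
Arguments integral_marginal {d d' X Y R mu g phi} mphi g_phi {f}.

Lemma EFin_Rintegral d (X : measurableType d) (R : realType)
    (mu : {measure set X -> \bar R}) (F : X -> R) :
  mu.-integrable setT (EFin \o F) -> (Rintegral mu setT F)%:E = (\int[mu]_x (F x)%:E)%E.
Proof. by move=> Fint; rewrite /Rintegral fineK// integrable_fin_num. Qed.

Section coupling.
Local Open Scope ereal_scope.
Context d (X : measurableType d) (R : realType).
Variables (mu mu' : {measure set X -> \bar R}) (g : {measure set (X * X) -> \bar R}).
Hypotheses (g_fst : forall A, measurable A -> g (fst @^-1` A) = mu A)
  (g_snd : forall A, measurable A -> g (snd @^-1` A) = mu' A).

Lemma coupling_Rintegral_dist_le (F F' : X -> R) (G : X * X -> R) :
  mu.-integrable setT (EFin \o F) -> mu'.-integrable setT (EFin \o F') ->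
  measurable_fun setT G -> (forall z, `|F z.1 - F' z.2| <= G z)%R ->
  (`|Rintegral mu setT F - Rintegral mu' setT F'|)%:E <= \int[g]_z (G z)%:E.
Proof.
move=> Fint F'int mG FG.
have gFint := integrable_marginal measurable_fst g_fst Fint.
have gF'int := integrable_marginal measurable_snd g_snd F'int.
rewrite -abse_EFin EFinB !EFin_Rintegral//.
rewrite (integral_marginal measurable_fst g_fst Fint).
rewrite (integral_marginal measurable_snd g_snd F'int) -integralB_EFin//.
have mFF' : measurable_fun setT (fun z : X * X => (F z.1)%:E - (F' z.2)%:E).
  by apply: emeasurable_funB; [case/integrableP: gFint | case/integrableP: gF'int].
apply: le_trans (le_abse_integral _ _ mFF') _ => //.
apply: ge0_le_integral => //.
- exact: measurableT_comp.
- exact/measurable_EFinP.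
- by move=> z _; rewrite -EFinB abse_EFin lee_fin.
Qed.

End coupling.
Arguments coupling_Rintegral_dist_le {d X R mu mu' g}.

Lemma ge0_integral_affine d (Y : measurableType d) (R : realType)
    (P : probability Y R) (a k : R) (h : Y -> R) :
  0 <= a -> 0 <= k -> measurable_fun setT h -> (forall y, 0 <= h y) ->
  (\int[P]_y (a + k * h y)%:E = a%:E + k%:E * \int[P]_y (h y)%:E)%E.
Proof.
move=> a0 k0 mh h0.
under eq_integral do rewrite EFinD EFinM.
rewrite ge0_integralD//.
- rewrite integral_cst// [X in (_ * X)%E](_ : _ = 1%E); last exact: probability_setT.
  rewrite mule1 ge0_integralZl_EFin//; last exact/measurable_EFinP.
  by move=> y _; rewrite lee_fin.
- by move=> y _; rewrite lee_fin mulr_ge0.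
- by apply/measurable_EFinP; apply: measurable_funM.
Qed.

Lemma lee_pmul_adde_ereal_inf (R : realType) (k a x : R) (S : set (\bar R)) :
  0 < k -> (forall y, S y -> x%:E <= k%:E * (a%:E + y))%E ->
  (x%:E <= k%:E * (a%:E + ereal_inf S))%E.
Proof.
move=> k0 xS.
have affineE (y : R) : (x / k - a <= y)%R = (x <= k * (a + y))%R.
  by rewrite lerBlDr ler_pdivrMr// mulrC addrC.
have : ((x / k - a)%:E <= ereal_inf S)%E.
  apply: le_ereal_inf_tmp => -[y| |] /xS//=.
  - by rewrite -EFinD -EFinM !lee_fin affineE.
  - by rewrite leey.
  - by rewrite addeNy gt0_muleNy ?lte_fin// leeNy_eq.
case: (ereal_inf S) => [w| |]//=.
  by rewrite -EFinD -EFinM !lee_fin affineE.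
by move=> _; rewrite addey// gt0_muley ?lte_fin// leey.
Qed.

Definition transport_cost {R : realType} {dx : nat}
    (z : (Rn R dx * Rn R dx) * (Rn R dx * Rn R dx)) : R :=
  enorm (row_mx ((z.1.1 : 'rV[R]_dx) - z.2.1) ((z.1.2 : 'rV[R]_dx) - z.2.2)).

Lemma measurable_transport_cost (R : realType) (dx : nat) :
  measurable_fun setT (@transport_cost R dx).
Proof.
pose Z := ((Rn R dx * Rn R dx) * (Rn R dx * Rn R dx))%type.
have mcoordB (u v : Z -> Rn R dx) : measurable_fun setT u -> measurable_fun setT v ->
    forall k, measurable_fun setT (fun z => ((u z : 'rV[R]_dx) - v z) 0 k).
  move=> mu mv k; apply: eq_measurable_fun (measurable_funB
    (measurable_coord_comp k mu) (measurable_coord_comp k mv)) => z _.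
  by rewrite !mxE.
apply: measurable_enorm_row_mx; apply: mcoordB;
  by [apply: measurableT_comp measurable_fst _
     | apply: measurableT_comp measurable_snd _].
Qed.

Lemma integrable_linear_growth (R : realType) (n : nat)
    (q : probability (Rn R n * Rn R n)%type R) (f : Rn R n -> R) (a b : R) :
  finite_second_moment q -> measurable_fun setT f ->
  (forall x, `|f x| <= a + b * enorm (x : 'rV[R]_n)) ->
  q.-integrable setT (fun p => (f p.1)%:E).
Proof.
move=> q2 mf f_growth.
pose M (p : Rn R n * Rn R n) := enorm (p.1 : 'rV[R]_n) ^+ 2 + enorm (p.2 : 'rV[R]_n) ^+ 2.
have M0 p : 0 <= M p by rewrite addr_ge0 ?sqr_ge0.
have mM : measurable_fun setT M.
  by apply: measurable_funD; apply: measurable_funX; apply: measurable_enorm => j;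
    apply: measurable_coord_comp; [exact: measurable_fst | exact: measurable_snd].
have Mint : q.-integrable setT (EFin \o M).
  apply/integrableP; split; first exact/measurable_EFinP.
  by under eq_integral do rewrite /= ger0_norm//.
pose c := `|a| + `|b|.
have cMint : q.-integrable setT (fun p => (c * (1 + M p))%:E).
  have oneint : q.-integrable setT (EFin \o cst 1).
    exact: finite_measure_integrable_cst.
  apply: (eq_integrable measurableT _ _ _
    (integrableZl measurableT c (integrableD measurableT oneint Mint))) => p _.
  by rewrite /= EFinM EFinD.
apply: le_integrable cMint => //.
  exact/measurable_EFinP/measurableT_comp.
move=> p _ /=; rewrite lee_fin [leRHS]ger0_norm ?mulr_ge0 ?addr_ge0 ?sqr_ge0//.
have := f_growth p.1; have := enorm_ge0 (p.1 : 'rV[R]_n).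
have := M0 p; have := ler_norm a; have := ler_norm b.
have := normr_ge0 a; have := normr_ge0 b.
have : enorm (p.1 : 'rV[R]_n) <= 1 + M p.
  rewrite /M; have := sqr_ge0 (enorm (p.1 : 'rV[R]_n) - 1).
  have := sqr_ge0 (enorm (p.2 : 'rV[R]_n)); nra.
rewrite /c; nra.
Qed.

Section grad_theta_F_lipschitz.
Variables (R : realType) (dt dx : nat) (l : 'rV[R]_dt -> 'rV[R]_dx -> R) (K : R).
Hypotheses (K_pos : 0 < K)
  (l_lip : forall th th' x x', enorm (grad_full l th x - grad_full l th' x')
                                 <= K * enorm (row_mx (th - th') (x - x'))).

Lemma grad_theta_coord_lipschitz th th' x x' i :
  `|grad_theta l th x 0 i - grad_theta l th' x' 0 i|
    <= K * (enorm (th - th') + enorm (x - x')).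
Proof.
have -> : grad_theta l th x 0 i - grad_theta l th' x' 0 i =
    (grad_full l th x - grad_full l th' x') 0 (lshift dx i).
  by rewrite /grad_full opp_row_mx add_row_mx row_mxEl !mxE.
apply: le_trans (coord_le_enorm _ _) _; apply: le_trans (l_lip _ _ _ _) _.
by rewrite ler_wpM2l ?enorm_row_mx_le// ltW.
Qed.

Lemma measurable_grad_theta_coord th i :
  measurable_fun setT (fun x : Rn R dx => grad_theta l th x 0 i).
Proof.
apply: continuous_measurable_open.
apply: (@lipschitz_continuous _ _ _ _ (K * dx%:R)) => x y.
apply: le_trans (grad_theta_coord_lipschitz _ _ _ _ _) _.
by rewrite subrr enorm0 add0r -mulrA ler_wpM2l ?enorm_le_mx_norm// ltW.
Qed.

Lemma integrable_grad_theta_coord th i (q : probability (Rn R dx * Rn R dx)%type R) :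
  finite_second_moment q -> q.-integrable setT (fun p => (grad_theta l th p.1 0 i)%:E).
Proof.
move=> q2; apply: (@integrable_linear_growth _ _ _ (fun x => grad_theta l th x 0 i)
  `|grad_theta l th 0 0 i| K) => //.
  exact: measurable_grad_theta_coord.
move=> x; have := grad_theta_coord_lipschitz th th x 0 i.
rewrite subrr subr0 enorm0 add0r => lip.
rewrite -[grad_theta l th x 0 i](subrK (grad_theta l th 0 0 i)) addrC.
by rewrite (le_trans (ler_normD _ _)) ?lerD2l.
Qed.

Lemma grad_theta_F_coupling_bound th th'
    (q q' : probability (Rn R dx * Rn R dx)%type R) g :
  finite_second_moment q -> finite_second_moment q' -> is_coupling q q' g ->
  ((enorm (grad_theta_F l th q - grad_theta_F l th' q'))%:E
    <= (dt.+1%:R * K)%:E * ((enorm (th - th'))%:E + \int[g]_z (transport_cost z)%:E))%E.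
Proof.
move=> q2 q'2 gc; set a := enorm (th - th').
have a0 : 0 <= a := enorm_ge0 _.
have cost0 (z : (Rn R dx * Rn R dx) * (Rn R dx * Rn R dx)) : 0 <= transport_cost z.
  exact: enorm_ge0.
have coord i : ((`|(grad_theta_F l th q - grad_theta_F l th' q') 0 i|)%:E
    <= (K * a)%:E + K%:E * \int[g]_z (transport_cost z)%:E)%E.
  rewrite !mxE -opprD normrN -ge0_integral_affine ?mulr_ge0 ?(ltW K_pos)//; last first.
    exact: measurable_transport_cost.
  apply: (coupling_Rintegral_dist_le (fun A mA => (gc A mA).1) (fun A mA => (gc A mA).2)).
  - exact: integrable_grad_theta_coord.
  - exact: integrable_grad_theta_coord.
  - apply: measurable_funD; first exact: measurable_cst.
    by apply: measurable_funM; [exact: measurable_cst | exact: measurable_transport_cost].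
  - move=> z; apply: le_trans (grad_theta_coord_lipschitz _ _ _ _ _) _.
    by rewrite mulrDr lerD2l ler_wpM2l ?enorm_row_mxl// ltW.
have : (0 <= \int[g]_z (transport_cost z)%:E)%E.
  by apply: integral_ge0 => z _; rewrite lee_fin.
move: coord; case: (\int[g]_z (transport_cost z)%:E)%E => [w| |]// coord.
  rewrite lee_fin -EFinD -EFinM lee_fin => w0.
  have vB : enorm (grad_theta_F l th q - grad_theta_F l th' q')
      <= dt%:R * (K * a + K * w).
    apply: enorm_le_coord_bound => [|i]; first by rewrite addr_ge0 ?mulr_ge0 ?(ltW K_pos).
    by have := coord i; rewrite -EFinM -EFinD lee_fin.
  apply: le_trans vB _; rewrite -mulrDr mulrA.
  by rewrite ler_wpM2r ?addr_ge0// ler_wpM2r ?(ltW K_pos)// ler_nat.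
by move=> _; rewrite addey// gt0_muley ?lte_fin ?mulr_gt0// leey.
Qed.

End grad_theta_F_lipschitz.

Theorem propositionG1 (R : realType) (dt dx : nat)
    (l : 'rV[R]_dt -> 'rV[R]_dx -> R)
    (l_diff : forall (th : 'rV[R]_dt) (x : 'rV[R]_dx),
        differentiable (fun p : 'rV[R]_dt * 'rV[R]_dx => l p.1 p.2) (th, x))
    (K : R) (K_pos : 0 < K)
    (l_lip : forall (th th' : 'rV[R]_dt) (x x' : 'rV[R]_dx),
        enorm (grad_full l th x - grad_full l th' x')
          <= K * enorm (row_mx (th - th') (x - x'))) :
  exists KF : R, 0 < KF /\
    forall (th th' : 'rV[R]_dt) (q q' : probability (Rn R dx * Rn R dx)%type R),
      in_P2 q -> in_P2 q' ->
      ((enorm (grad_theta_F l th q - grad_theta_F l th' q'))%:E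
         <= KF%:E * ((enorm (th - th'))%:E + W1 q q'))%E.
Proof.
(* dt.+1 rather than dt keeps the constant positive when dt = 0. *)
have KF_gt0 : 0 < dt.+1%:R * K by rewrite mulr_gt0.
exists (dt.+1%:R * K); split => // th th' q q' [_ q2] [_ q'2].
apply: lee_pmul_adde_ereal_inf => // _ [g gc <-].
exact: grad_theta_F_coupling_bound.
Qed.
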